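(* Let $S$ be a finite nonempty semigroup, and suppose $S$ satisfies an identity $x_{\lambda_1}x_{\lambda_2}\cdots x_{\lambda_\ell}=x_{\lambda'_1}x_{\lambda'_2}\cdots x_{\lambda'_{\ell'}}$ (with $\ell,\ell'\ge 1$ and indices $\lambda_a,\lambda'_b$ drawn from a set of variables $\{x_1,x_2,x_3,\dots\}$) for every substitution of elements of $S$ for the variables. If $\lambda_1\neq\lambda'_1$, then $S$ is $K$-thin. Dually, if $\lambda_\ell\neq\lambda'_{\ell'}$, then $S$ is $K$-thin.
   Context: For a finite nonempty semigroup $S$, the minimal ideal $K(S)$ is the intersection of all nonempty two-sided ideals of $S$. A Rees matrix semigroup $\mathcal{M}(H;I,J;p)$, for sets $I,J$, a group $H$ and a function $p\colon J\times I\to H$, is the set $I\times H\times J$ with product $(i,h,j)(i',h',j')=(i,h\,p(j,i')\,h',j')$. It is known that $K(S)$ is always isomorphic to such a Rees matrix semigroup with $H$ a finite group and $p$ normalized (i.e. $p(j_0,i)=e_H$ and $p(j,i_0)=e_H$ for some fixed $i_0\in I$, $j_0\in J$ and all $i,j$). $S$ is called $K$-thin if $K(S)$ has such a normalized Rees matrix structure with $|I|=1$ or $|J|=1$; equivalently, $K(S)$ is left-simple or right-simple. Examples of such identities are $xy=yx$ (commutativity) and $xya=yxa$ (left-commutativity). *)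

From mathcomp Require Import all_boot.
Set Implicit Arguments. Unset Strict Implicit. Unset Printing Implicit Defensive.

(* A (finite) semigroup is a finType T with an associative operation op. *)

(* Only meaningful for nonempty words;
   the empty word gets a junk value (never used, words are assumed nonempty). *)
Definition word_eval (T : Type) (op : T -> T -> T) (f : nat -> T) (w : seq nat) : T :=
  match w with
  | [::] => f 0
  | h :: t => foldl (fun a i => op a (f i)) (f h) t
  end.

Definition is_ideal (T : finType) (op : T -> T -> T) (I : {set T}) : bool :=
  [forall x, forall y, (y \in I) ==> ((op x y \in I) && (op y x \in I))].

Definition minimal_ideal (T : finType) (op : T -> T -> T) : {set T} :=
  \bigcap_(I : {set T} | (I != set0) && is_ideal op I) I.

Definition left_simple (T : finType) (op : T -> T -> T) (K : {set T}) : Prop :=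
  forall L : {set T}, L != set0 -> L \subset K ->
    (forall a b, a \in K -> b \in L -> op a b \in L) -> L = K.

Definition right_simple (T : finType) (op : T -> T -> T) (K : {set T}) : Prop :=
  forall R : {set T}, R != set0 -> R \subset K ->
    (forall a b, a \in R -> b \in K -> op a b \in R) -> R = K.

Definition K_thin (T : finType) (op : T -> T -> T) : Prop :=
  left_simple op (minimal_ideal op) \/ right_simple op (minimal_ideal op).

From mathcomp Require Import all_boot.

Set Implicit Arguments.
Unset Strict Implicit.
Unset Printing Implicit Defensive.

(* Let K be the minimal ideal and suppose the identity starts with x_i on the
   left and with x_j, j <> i, on the right.  Given a nonempty right ideal R of
   K, pick a in R and c in K, and substitute a for x_i and c for every other
   variable: the left side lies in R, the right side is c or c v with v in K.
   In the minimal ideal of a finite semigroup c is right divisible by c v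
   inside K (write c = s (c v) t, iterate, and use that the powers of v t are
   eventually periodic), so c lies in R and R = K.  For the last letters, run
   the same argument in the opposite semigroup. *)

Lemma word_eval_rcons (T : Type) (op : T -> T -> T) f i w :
  0 < size w -> word_eval op f (rcons w i) = op (word_eval op f w) (f i).
Proof. by case: w => [|h t] //= _; rewrite foldl_rcons. Qed.

Section WordEval.

Variables (T : Type) (op : T -> T -> T).
Hypothesis opA : associative op.

Lemma word_eval_cons f i w :
  0 < size w -> word_eval op f (i :: w) = op (f i) (word_eval op f w).
Proof.
case: w => [|h t] //= _.
by elim: t (f h) => [|h' t IH] a //=; rewrite -IH opA.
Qed.

Lemma word_eval_rev f w :
  0 < size w -> word_eval (fun x y => op y x) f (rev w) = word_eval op f w.
Proof.
elim: w => [|h t IH] // _; case: t IH => [|h' t] IH //.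
by rewrite rev_cons word_eval_rcons ?size_rev // IH // [RHS]word_eval_cons.
Qed.

End WordEval.

Section MinimalIdeal.

Variables (T : finType) (op : T -> T -> T).
Hypothesis opA : associative op.

Local Notation "x * y" := (op x y).
Local Notation K := (minimal_ideal op).

Lemma is_idealP (I : {set T}) :
  reflect (forall x y, y \in I -> (x * y \in I) && (y * x \in I)) (is_ideal op I).
Proof.
apply: (iffP forallP) => [H x y | H x]; first exact: (implyP (forallP (H x) y)).
by apply/forallP => y; apply/implyP; apply: H.
Qed.

Lemma minimal_ideal_is_ideal : is_ideal op K.
Proof.
apply/is_idealP => x y /bigcapP yK.
by apply/andP; split; apply/bigcapP => I /[dup] /yK yI /andP[_ /is_idealP/(_ x y yI)/andP[]].
Qed.

Lemma mem_minimal_idealMl x y : y \in K -> x * y \in K.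
Proof. by move/(is_idealP _ minimal_ideal_is_ideal x)/andP=> []. Qed.

Lemma mem_minimal_idealMr x y : x \in K -> x * y \in K.
Proof. by move/(is_idealP _ minimal_ideal_is_ideal y)/andP=> []. Qed.

Lemma minimal_ideal_generated b k :
  b \in K -> k \in K -> exists s t, b = s * (k * t).
Proof.
move=> bK kK.
pose I := [set z | [exists s, exists t, z == s * (k * t)]].
have I_ne : I != set0.
  by apply/set0Pn; exists (k * (k * k)); rewrite inE; apply/existsP; exists k; apply/existsP; exists k.
have I_ideal : is_ideal op I.
  apply/is_idealP => x _ /[!inE] /existsP[s /existsP[t /eqP->]].
  apply/andP; split; apply/existsP.
    by exists (x * s); apply/existsP; exists t; rewrite !opA.
  by exists s; apply/existsP; exists (t * x); rewrite !opA.
have /subsetP/(_ b bK) : K \subset I by apply: bigcap_inf; rewrite I_ne I_ideal.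
by rewrite inE => /existsP[s /existsP[t /eqP->]]; exists s, t.
Qed.

(* [spow w n] is w^(n+1): there is no unit to start the powers from. *)
Definition spow w n := iter n (op w) w.

Lemma spowD w a b : spow w (a + b).+1 = spow w a * spow w b.
Proof. by elim: a => [|a IH] //; rewrite addSn -[LHS]/(w * spow w (a + b).+1) IH opA. Qed.

Lemma spow_eventually_periodic w : exists p k, spow w p = spow w (p + k).+1.
Proof.
have /injectivePn[i [j neq_ij eq_ij]] : ~~ injectiveb (fun i : 'I_#|T|.+1 => spow w i).
  by apply/negP => /injectiveP/leq_card; rewrite card_ord ltnn.
case: (ltngtP i j) => [lt_ij | lt_ji | /val_inj eq_ij']; last by rewrite eq_ij' eqxx in neq_ij.
- by exists i, (j - i.+1); rewrite -addSn subnKC.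
- by exists j, (i - j.+1); rewrite -addSn subnKC.
Qed.

Lemma minimal_ideal_right_divisible x y :
  x \in K -> y \in K -> exists2 u, u \in K & x = x * y * u.
Proof.
move=> xK yK.
suff [u Hu] : exists u, x = x * y * u.
  by exists (u * (y * u)); [apply/mem_minimal_idealMl/mem_minimal_idealMr | rewrite !opA -Hu].
have [s [t Hst]] := minimal_ideal_generated xK (mem_minimal_idealMr y xK).
pose w := y * t.
have Hs_n n : exists s', x = s' * (x * spow w n).
  elim: n => [|n [s' Hs']]; first by exists s; rewrite {1}Hst !opA.
  by exists (s' * s); rewrite [in LHS]Hs' {1}Hst !opA.
have [p [k Hpk]] := spow_eventually_periodic w.
have [s' Hs'] := Hs_n p.
have Hx : x = x * spow w k by rewrite {2}Hs' -!opA -spowD -Hpk.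
(* x = x w^(k+1) w^(k+1), and the product starts with a factor w = y t *)
exists (t * spow w (k + k)).
by rewrite -[x * y * _]opA [y * _]opA -/w -[w * _]/(spow w (k + k).+1) spowD opA -!Hx.
Qed.

Lemma word_eval_cons_mem (P Q : {set T}) f i t :
  (forall a b, a \in P -> b \in Q -> a * b \in P) ->
  (forall k, f k \in Q) -> f i \in P -> word_eval op f (i :: t) \in P.
Proof. by move=> PQ fQ /=; elim: t (f i) => [|h t IH] a //= aP; apply/IH/PQ. Qed.

Lemma right_simple_of_head_neq i j t t' :
  (forall f, word_eval op f (i :: t) = word_eval op f (j :: t')) ->
  i != j -> right_simple op K.
Proof.
move=> ident neq_ij R /set0Pn[a aR] RK R_ideal.
apply/eqP; rewrite eqEsubset RK; apply/subsetP => c cK.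
pose f k := if k == i then a else c.
have fK k : f k \in K by rewrite /f; case: ifP => // _; apply: (subsetP RK).
have fj : f j = c by rewrite /f eq_sym (negbTE neq_ij).
have := word_eval_cons_mem t R_ideal fK (_ : f i \in R).
rewrite ident {1}/f eqxx => /(_ aR).
case: t' ident => [|h t'] _; first by rewrite /= fj.
rewrite (word_eval_cons opA) // fj => cvR.
have vK : word_eval op f (h :: t') \in K.
  by apply: word_eval_cons_mem => // ? ? ? _; apply: mem_minimal_idealMr.
by have [u uK ->] := minimal_ideal_right_divisible cK vK; apply: R_ideal.
Qed.

End MinimalIdeal.

Lemma minimal_ideal_opposite (T : finType) (op : T -> T -> T) :
  minimal_ideal (fun x y => op y x) = minimal_ideal op.
Proof.
apply: eq_bigl => I; congr (_ && _).
by apply/is_idealP/is_idealP => H x y /(H x)/andP[-> ->].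
Qed.

Lemma left_simple_of_last_neq (T : finType) (op : T -> T -> T) (opA : associative op)
    i j t t' :
  (forall f, word_eval op f (rcons t i) = word_eval op f (rcons t' j)) ->
  i != j -> left_simple op (minimal_ideal op).
Proof.
move=> ident neq_ij L L_ne LK L_ideal.
have opA' : associative (fun x y => op y x) by move=> x y z; rewrite opA.
have ident' f : word_eval (fun x y => op y x) f (i :: rev t)
              = word_eval (fun x y => op y x) f (j :: rev t').
  by rewrite -!rev_rcons !word_eval_rev ?size_rcons.
have := right_simple_of_head_neq opA' ident' neq_ij.
rewrite minimal_ideal_opposite; apply=> // a b aL bK; exact: L_ideal.
Qed.

Theorem theorem7p9 (T : finType) (op : T -> T -> T)
    (op_assoc : associative op) (T_nonempty : 0 < #|T|)
    (lam lam' : seq nat) (lam_ne : 0 < size lam) (lam'_ne : 0 < size lam')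
    (ident : forall f : nat -> T, word_eval op f lam = word_eval op f lam') :
  (head 0 lam != head 0 lam' -> K_thin op) /\
  (last 0 lam != last 0 lam' -> K_thin op).
Proof.
split.
- case: lam lam_ne ident => [|i t] // _; case: lam' lam'_ne => [|j t'] // _ ident /= neq_ij.
  by right; apply: right_simple_of_head_neq ident neq_ij.
- case/lastP: lam lam_ne ident => [|t i] // _; case/lastP: lam' lam'_ne => [|t' j] // _ ident.
  rewrite !last_rcons => neq_ij.
  by left; apply: left_simple_of_last_neq ident neq_ij.
Qed.
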